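(* Let $q$ be an odd prime power, $\omega$ a non-square in $\mathbb F_q$, $\epsilon\in\mathbb F_{q^2}$ with $\epsilon^2=\omega$, and write $z=z_1+\epsilon z_2$ ($z_i\in\mathbb F_q$) for $z\in\mathbb F_{q^2}$. Let $\mathcal C: aX^2+bXY+cXZ+dYZ+eZ^2=0$ be a non-singular conic of $\mathrm{PG}(2,q^2)$ with $b\ne0$ and $b_1d_2=b_2d_1$ (i.e. $d/b\in\mathbb F_q$), and assume $(b_1,d_1)\neq(0,0)$. Then the line of $\mathrm{PG}(2,q)$ with equation $b_1X+d_1Z=0$ is the tangent line to $\mathcal C$ at the point $(0:1:0)$; in particular it contains exactly $q$ points of $\mathrm{PG}(2,q)$ external to $\mathcal C$.
   Context: $\mathrm{PG}(2,q)$ is canonically embedded in $\mathrm{PG}(2,q^2)$. A point not on $\mathcal C$ is external if it lies on two tangent lines to $\mathcal C$. The condition $(b_1,d_1)\ne(0,0)$ is the implicit requirement that $b_1X+d_1Z=0$ define a line. *)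

From mathcomp Require Import all_boot all_order all_algebra all_field.
Set Implicit Arguments. Unset Strict Implicit. Unset Printing Implicit Defensive.
Import GRing.Theory.
Local Open Scope ring_scope.

Section PG2.
Variable K : finFieldType.

Definition pt := (K * K * K)%type.
Definition px (v : pt) : K := v.1.1.
Definition py (v : pt) : K := v.1.2.
Definition pz (v : pt) : K := v.2.

(* canonical representative of a projective point / line: first nonzero
   coordinate equal to 1 (this excludes the zero vector). *)
Definition normalized (v : pt) : bool :=
  if px v != 0 then px v == 1 else if py v != 0 then py v == 1 else pz v == 1.

(* the subfield F_q of K, for #|K| = q^2: fixed points of x |-> x^q *)
Definition inFq (q : nat) (x : K) : bool := x ^+ q == x.
Definition ptFq (q : nat) (v : pt) : bool :=
  [&& inFq q (px v), inFq q (py v) & inFq q (pz v)].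

Definition conicQ (a b c d e : K) (v : pt) : K :=
  a * px v ^+ 2 + b * px v * py v + c * px v * pz v + d * py v * pz v
  + e * pz v ^+ 2.
Definition on_conic a b c d e (v : pt) : bool := conicQ a b c d e v == 0.

Definition nonsingular_conic (a b c d e : K) : Prop :=
  ~ exists v : pt, [/\ v != (0, 0, 0), conicQ a b c d e v = 0,
     2%:R * a * px v + b * py v + c * pz v = 0,
     b * px v + d * pz v = 0 &
     c * px v + d * py v + 2%:R * e * pz v = 0].

Definition on_line (l v : pt) : bool :=
  px l * px v + py l * py v + pz l * pz v == 0.

Definition tangent_at a b c d e (l P : pt) : bool :=
  [&& l != (0, 0, 0), on_line l P, on_conic a b c d e P &
      [forall v : pt, (normalized v && on_line l v && on_conic a b c d e v)
                      ==> (v == P)]].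

Definition tangent_line a b c d e (l : pt) : bool :=
  [exists P : pt, normalized P && tangent_at a b c d e l P].

Definition external a b c d e (P : pt) : bool :=
  ~~ on_conic a b c d e P &&
  [exists l : pt, exists m : pt,
     [&& normalized l, normalized m, l != m,
         tangent_line a b c d e l, tangent_line a b c d e m,
         on_line l P & on_line m P]].
End PG2.

(* The tangent to C at pY = (0:1:0) is its polar line bX + dZ = 0; as d/b = d1/b1, this is
   the F_q-line b1X + d1Z = 0.  Any other point R of it is external: the polar line of R
   passes through pY and, C being non-singular, is not the tangent at pY, so it meets C in a
   second point P, whose tangent passes through R.  The F_q-points of the line other than pY
   are the (-d1/b1 : t : 1), t in F_q, and F_q = {x | x^q = x} has q elements because
   x^(q^2) = x for every x in K. *)

From mathcomp Require Import all_boot all_order all_algebra all_field.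
From mathcomp Require Import zify ring.
Import GRing.Theory.
Local Open Scope ring_scope.
Set Implicit Arguments.
Unset Strict Implicit.

Section Subfield.
Variables (K : finFieldType) (q : nat).

Lemma card_roots_lt (p : {poly K}) (A : {set K}) :
  p != 0 -> {subset A <= root p} -> (#|A| < size p)%N.
Proof.
move=> p_neq0 Ap; rewrite cardE max_poly_roots ?enum_uniq //.
by apply/allP => x; rewrite mem_enum => /Ap.
Qed.

Lemma inFq1 : inFq q (1 : K).
Proof. by rewrite /inFq expr1n. Qed.

Lemma inFqM (x y : K) : inFq q x -> inFq q y -> inFq q (x * y).
Proof. by rewrite /inFq exprMn => /eqP -> /eqP ->. Qed.

Lemma inFqV (x : K) : inFq q x -> inFq q x^-1.
Proof. by rewrite /inFq exprVn => /eqP ->. Qed.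

Lemma inFqN (x : K) : odd q -> inFq q x -> inFq q (- x).
Proof. by move=> q_odd; rewrite /inFq exprNn -signr_odd q_odd mulN1r => /eqP ->. Qed.

Hypotheses (q_gt1 : (1 < q)%N) (cardK : #|K| = (q ^ 2)%N).

Lemma card_inFq : #|[set x : K | inFq q x]| = q.
Proof.
set S := [set x : K | inFq q x].
have size_XqX : size ('X^q - 'X : {poly K}) = q.+1.
  by rewrite size_polyDl ?size_polyXn // size_polyN size_polyX.
have S_le : (#|S| <= q)%N.
  rewrite -ltnS -size_XqX card_roots_lt -?size_poly_eq0 ?size_XqX // => x.
  by rewrite inE unfold_in /= !hornerE subr_eq0.
(* since x^(q^2) = x, subrXX shows that every x outside S is a root of g *)
pose g : {poly K} := 1 + \sum_(i < q) 'X^(q * (q.-1 - i) + i).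
have g_root x : x \notin S -> root g x.
  rewrite inE /inFq => xS.
  have xqq : x ^+ q ^+ q = x by rewrite -exprM mulnn -cardK expf_card.
  have : (x ^+ q - x) * g.[x] = 0.
    rewrite /g hornerD hornerC horner_sum mulrDr mulr1.
    under eq_bigr do rewrite hornerXn exprD exprM.
    by rewrite -subrXX xqq subrKA subrr.
  by move/eqP; rewrite mulf_eq0 subr_eq0 (negbTE xS).
have g_neq0 : g != 0.
  have g0 : g.[0] = 1.
    rewrite /g hornerD hornerC horner_sum big1 ?addr0 // => -[i /= lt_iq] _.
    by rewrite hornerXn expr0n; case: eqP => //; nia.
  by apply: contra_eq_neq g0 => ->; rewrite horner0 eq_sym oner_neq0.
have size_g : (size g <= (q * q.-1).+1)%N.
  rewrite (leq_trans (size_polyD _ _)) // geq_max size_poly1.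
  rewrite (leq_trans (size_sum _ _ _)) //; apply/bigmax_leqP => -[i /= lt_iq] _.
  rewrite size_polyXn ltnS; nia.
have notS_le : (#|~: S| <= q * q.-1)%N.
  rewrite -ltnS (leq_trans _ size_g) // card_roots_lt // => x.
  by rewrite inE => /g_root.
have := cardsC S; rewrite cardK; nia.
Qed.
End Subfield.

Section Points.
Variable K : finFieldType.
Implicit Types (k : K) (u v l : pt K).

Definition scalept k v : pt K := (k * px v, k * py v, k * pz v).

Definition normalize v : pt K :=
  if px v != 0 then scalept (px v)^-1 v
  else if py v != 0 then scalept (py v)^-1 v else scalept (pz v)^-1 v.

Definition pY : pt K := (0, 1, 0).

Lemma scalept_comp k1 k2 v : scalept k1 (scalept k2 v) = scalept (k1 * k2) v.
Proof. by rewrite /scalept /px /py /pz /= !mulrA. Qed.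

Lemma scalept_eq0 k v : k != 0 -> (scalept k v == (0, 0, 0)) = (v == (0, 0, 0)).
Proof.
case: v => [[x y] z] k_neq0; rewrite /scalept /px /py /pz /= !xpair_eqE.
by rewrite !mulf_eq0 (negbTE k_neq0).
Qed.

Lemma scale1pt v : scalept 1 v = v.
Proof. by case: v => [[x y] z]; rewrite /scalept !mul1r. Qed.

Lemma normalized_neq0 v : normalized v -> v != (0, 0, 0).
Proof.
by apply: contraTneq => ->; rewrite /normalized /px /py /pz /= eqxx eq_sym oner_eq0.
Qed.

Lemma normalized_pY : normalized pY.
Proof. by rewrite /normalized /pY /px /py /pz /= eqxx oner_eq0 /= eqxx. Qed.

Lemma normalized_scale k v : normalized v -> normalized (scalept k v) -> k = 1.
Proof.
have [-> _|k_neq0] := eqVneq k 0.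
  by rewrite /scalept !mul0r => /normalized_neq0; rewrite eqxx.
case: v => [[x y] z]; rewrite /normalized /scalept /px /py /pz /= !mulf_eq0.
rewrite (negbTE k_neq0) /=.
by case: eqP => _ /=; [case: eqP => _ /=|]; move=> /eqP -> /eqP; rewrite mulr1.
Qed.

Lemma normalize_scale v :
  v != (0, 0, 0) -> exists2 k, k != 0 & normalize v = scalept k v.
Proof.
case: v => [[x y] z] v_neq0; rewrite /normalize /px /py /pz /=.
have [x0|x0] := eqVneq x 0; last by exists x^-1; rewrite ?invr_eq0.
have [y0|y0] := eqVneq y 0; last by exists y^-1; rewrite ?invr_eq0.
by exists z^-1; rewrite // invr_eq0; apply: contraNneq v_neq0 => z0; rewrite x0 y0 z0.
Qed.

Lemma normalized_normalize v : v != (0, 0, 0) -> normalized (normalize v).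
Proof.
case: v => [[x y] z] v_neq0; rewrite /normalize /normalized /scalept /px /py /pz /=.
have [x0|x0] := eqVneq x 0; last by rewrite mulVf ?oner_eq0 /=.
have [y0|y0] := eqVneq y 0; last by rewrite x0 /= mulr0 eqxx /= mulVf // oner_eq0 /=.
rewrite x0 y0 ?eqxx /= !mulr0 ?eqxx /= mulVf //.
by apply: contraNneq v_neq0 => z0; rewrite x0 y0 z0.
Qed.

Lemma normalize_id v : normalized v -> normalize v = v.
Proof.
move=> nv; have [k _ ek] := normalize_scale (normalized_neq0 nv).
have := normalized_normalize (normalized_neq0 nv).
by rewrite ek => /(normalized_scale nv) ->; rewrite scale1pt.
Qed.

Lemma normalizeZ k v : k != 0 -> v != (0, 0, 0) -> normalize (scalept k v) = normalize v.
Proof.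
move=> k_neq0 v_neq0; have kv_neq0 : scalept k v != (0, 0, 0) by rewrite scalept_eq0.
have [k1 _ ek1] := normalize_scale kv_neq0.
have [k2 k2_neq0 ek2] := normalize_scale v_neq0.
have eN : scalept (k1 * k / k2) (normalize v) = normalize (scalept k v).
  by rewrite ek1 ek2 !scalept_comp mulfVK.
have c1 : k1 * k / k2 = 1.
  apply: (normalized_scale (normalized_normalize v_neq0)).
  by rewrite eN; apply: normalized_normalize.
by rewrite -eN c1 scale1pt.
Qed.

Lemma eq_pY v : normalized v -> px v = 0 -> pz v = 0 -> v = pY.
Proof.
case: v => [[x y] z]; rewrite /normalized /pY /px /py /pz /= => + x0 z0.
rewrite x0 z0 eqxx /=.
have [->|_ /eqP -> //] := eqVneq y 0; by rewrite /= eq_sym oner_eq0.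
Qed.

Lemma on_lineZl k l v : k != 0 -> on_line (scalept k l) v = on_line l v.
Proof.
move=> k_neq0; rewrite /on_line /scalept /px /py /pz /= -!mulrA -!mulrDr.
by rewrite mulf_eq0 (negbTE k_neq0).
Qed.

Lemma on_lineZr k l v : k != 0 -> on_line l (scalept k v) = on_line l v.
Proof.
move=> k_neq0; rewrite /on_line.
have -> : px l * px (scalept k v) + py l * py (scalept k v) + pz l * pz (scalept k v)
  = k * (px l * px v + py l * py v + pz l * pz v).
  by rewrite /scalept /px /py /pz /=; ring.
by rewrite mulf_eq0 (negbTE k_neq0).
Qed.

Lemma ptFqZ q k v : inFq q k -> ptFq q v -> ptFq q (scalept k v).
Proof.
rewrite /ptFq /scalept /px /py /pz /= => Fk /and3P[Fx Fy Fz].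
by rewrite !inFqM.
Qed.

Lemma ptFq_normalize q v : ptFq q v -> ptFq q (normalize v).
Proof.
move=> /[dup] Fv /and3P[Fx Fy Fz]; rewrite /normalize.
by case: ifP => _; [|case: ifP => _]; apply: ptFqZ => //; apply: inFqV.
Qed.

Lemma on_line_normalizel l v : l != (0, 0, 0) -> on_line (normalize l) v = on_line l v.
Proof. by move=> /normalize_scale[k k_neq0 ->]; rewrite on_lineZl. Qed.

End Points.

Arguments pY {K}.
Arguments normalized_pY {K}.

Section Conic.
Variables (K : finFieldType) (a b c d e : K).
Local Notation Q := (conicQ a b c d e).
Local Notation tangent_at := (tangent_at a b c d e).
Implicit Types (k s t : K) (u v w P R l : pt K).

Definition polar v : pt K :=
  (2%:R * a * px v + b * py v + c * pz v, b * px v + d * pz v,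
   c * px v + d * py v + 2%:R * e * pz v).

Definition bform u v : K :=
  px (polar u) * px v + py (polar u) * py v + pz (polar u) * pz v.

Definition lincomb s u t v : pt K :=
  (s * px u + t * px v, s * py u + t * py v, s * pz u + t * pz v).

Lemma on_line_polar u v : on_line (polar u) v = (bform u v == 0).
Proof. by []. Qed.

Lemma bformC u v : bform u v = bform v u.
Proof. by rewrite /bform /polar /px /py /pz /=; ring. Qed.

Lemma bformvv u : bform u u = 2%:R * Q u.
Proof. by rewrite /bform /polar /conicQ /px /py /pz /=; ring. Qed.

Lemma bformZr u k v : bform u (scalept k v) = k * bform u v.
Proof. by rewrite /bform /scalept /px /py /pz /=; ring. Qed.

Lemma bform_lincombr u s v t w :
  bform u (lincomb s v t w) = s * bform u v + t * bform u w.
Proof. by rewrite /bform /lincomb /px /py /pz /=; ring. Qed.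

Lemma conicQZ k v : Q (scalept k v) = k ^+ 2 * Q v.
Proof. by rewrite /conicQ /scalept /px /py /pz /=; ring. Qed.

Lemma conicQ_lincomb s u t v :
  Q (lincomb s u t v) = s ^+ 2 * Q u + s * t * bform u v + t ^+ 2 * Q v.
Proof. by rewrite /conicQ /lincomb /bform /polar /px /py /pz /=; ring. Qed.

Lemma conicQ_pY : Q pY = 0.
Proof. by rewrite /conicQ /pY /px /py /pz /=; ring. Qed.

Lemma polar_pY : polar pY = (b, 0, d).
Proof. by rewrite /polar /pY /px /py /pz /=; congr (_, _, _); ring. Qed.

Lemma bform_pY v : bform pY v = b * px v + d * pz v.
Proof. by rewrite /bform polar_pY /px /py /pz /=; ring. Qed.

Hypothesis nsC : nonsingular_conic a b c d e.
Hypothesis two_neq0 : 2%:R != 0 :> K.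

Lemma polar_neq0 v : v != (0, 0, 0) -> polar v != (0, 0, 0).
Proof.
move=> v_neq0; apply/eqP => pv0; apply: nsC; exists v.
have Qv0 : Q v = 0.
  have := bformvv v; rewrite /bform pv0 /px /py /pz /= !mul0r !addr0.
  by move=> /esym/eqP; rewrite mulf_eq0 (negbTE two_neq0) => /eqP.
by move: pv0; rewrite /polar => -[-> -> ->].
Qed.

Hypothesis b_neq0 : b != 0.

Lemma discr_neq0 : a * d ^+ 2 - c * b * d + e * b ^+ 2 != 0.
Proof.
apply/eqP => discr0; apply: nsC; exists (- d, 2%:R * a * d / b - c, b).
rewrite /conicQ /px /py /pz /=; split.
- by rewrite !xpair_eqE (negbTE b_neq0) andbF.
- by rewrite -discr0; field.
- by field.
- by ring.
- have -> : c * - d + d * (2%:R * a * d / b - c) + 2%:R * e * b =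
    2%:R / b * (a * d ^+ 2 - c * b * d + e * b ^+ 2) by field.
  by rewrite discr0 mulr0.
Qed.

Lemma conic_polar_pY u : Q u = 0 -> bform pY u = 0 -> px u = 0 /\ pz u = 0.
Proof.
case: u => [[x y] z]; rewrite bform_pY /conicQ /px /py /pz /= => Qu xz.
have ex : x = - d * z / b.
  by apply: (mulfI b_neq0); rewrite -[b * x](addrK (d * z)) xz; field.
have : z ^+ 2 * (a * d ^+ 2 - c * b * d + e * b ^+ 2) = 0.
  by rewrite -(mulr0 (b ^+ 2)) -Qu ex; field.
move/eqP; rewrite mulf_eq0 (negbTE discr_neq0) orbF expf_eq0 /= => /eqP z0.
by rewrite ex z0 mulr0 mul0r.
Qed.

Lemma conic_polar_eq P v : normalized P -> normalized v -> Q P = 0 -> Q v = 0 ->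
  bform P v = 0 -> v = P.
Proof.
move=> nP nv QP Qv BPv.
have [BP0|BP_neq0] := eqVneq (bform pY P) 0.
  have [Px Pz] := conic_polar_pY QP BP0.
  have eP := eq_pY nP Px Pz.
  have [vx vz] : px v = 0 /\ pz v = 0 by apply: conic_polar_pY; rewrite -?eP.
  by rewrite eP (eq_pY nv).
(* w lies on C and on the tangent at pY, so it is a multiple of pY; pairing with P kills it *)
pose w := lincomb (bform pY v) P (- bform pY P) v.
have Qw : Q w = 0 by rewrite conicQ_lincomb QP Qv BPv; ring.
have [wx wz] : px w = 0 /\ pz w = 0.
  by apply: conic_polar_pY; rewrite // bform_lincombr; ring.
have wy : py w = 0.
  have : bform P w = bform pY P * py w.
    by rewrite bform_pY /bform wx wz /polar /px /py /pz /=; ring.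
  rewrite bform_lincombr bformvv QP BPv => /esym/eqP.
  by rewrite !mulr0 addr0 mulf_eq0 (negbTE BP_neq0) => /eqP.
have solve x y :
    bform pY v * x + - bform pY P * y = 0 -> y = bform pY v / bform pY P * x.
  move=> /eqP; rewrite mulNr subr_eq0 => /eqP h.
  by apply: (mulfI BP_neq0); rewrite -h; field.
have ev : v = scalept (bform pY v / bform pY P) P.
  move: wx wy wz => /solve ex /solve ey /solve ez.
  by rewrite /scalept -ex -ey -ez -!surjective_pairing.
have k1 : bform pY v / bform pY P = 1 by apply: (normalized_scale nP); rewrite -ev.
by rewrite ev k1 scale1pt.
Qed.

Lemma tangent_atZ k l P : k != 0 -> tangent_at l P -> tangent_at (scalept k l) P.
Proof.
move=> k_neq0 /and4P[l_neq0 lP CP /forallP uniqP]; apply/and4P; split => //.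
- by rewrite scalept_eq0.
- by rewrite on_lineZl.
- by apply/forallP => v; rewrite on_lineZl.
Qed.

Lemma tangent_at_polar P : normalized P -> Q P = 0 -> tangent_at (polar P) P.
Proof.
move=> nP QP; apply/and4P; split.
- exact/polar_neq0/normalized_neq0.
- by rewrite on_line_polar bformvv QP mulr0.
- by rewrite /on_conic QP.
apply/forallP => v; apply/implyP => /andP[/andP[nv /eqP BPv] /eqP Qv].
by rewrite (conic_polar_eq nP nv QP Qv BPv).
Qed.

Lemma tangent_line_polar P : normalized P -> Q P = 0 ->
  tangent_line a b c d e (normalize (polar P)).
Proof.
move=> nP QP; apply/existsP; exists P; rewrite nP /=.
have [k k_neq0 ->] := normalize_scale (polar_neq0 (normalized_neq0 nP)).
exact/tangent_atZ/tangent_at_polar.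
Qed.

Lemma polar_det_neq0 R : bform pY R = 0 -> (px R, pz R) != (0, 0) ->
  d * px (polar R) - b * pz (polar R) != 0.
Proof.
case: R => [[x y] z]; rewrite bform_pY /polar /px /py /pz /= => BR xz.
apply/eqP => det0.
(* otherwise the point R - (px (polar R) / b) pY would have a zero polar *)
have /polar_neq0/eqP : (x, y - (2%:R * a * x + b * y + c * z) / b, z) != (0, 0, 0).
  by apply: contra_neq xz => -[-> _ ->].
apply; rewrite /polar /px /py /pz /=; congr (_, _, _); first by field.
  exact: BR.
by rewrite -[RHS](mulr0 (- b^-1)) -det0; field.
Qed.

Lemma second_tangency R : normalized R -> bform pY R = 0 -> R != pY ->
  exists P, [/\ normalized P, Q P = 0, bform R P = 0 & P != pY].
Proof.
move=> nR BR R_neq_pY.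
have xz : (px R, pz R) != (0, 0).
  by apply: contra_neq R_neq_pY => -[x0 z0]; apply: eq_pY.
have det_neq0 := polar_det_neq0 BR xz.
set al := px (polar R) in det_neq0; set ga := pz (polar R) in det_neq0.
(* the polar line al X + ga Z = 0 of R meets the conic again at P1 *)
pose P1 : pt K :=
  (- ga, - (a * ga ^+ 2 - c * al * ga + e * al ^+ 2) / (d * al - b * ga), al).
have alga : (al, ga) != (0, 0).
  by apply: contra_neq det_neq0 => -[-> ->]; rewrite !mulr0 subr0.
have P1_neq0 : P1 != (0, 0, 0).
  by apply: contra_neq alga => -[/eqP]; rewrite oppr_eq0 => /eqP -> _ ->.
have QP1 : Q P1 = 0 by rewrite /conicQ /P1 /px /py /pz /=; field.
have BRP1 : bform R P1 = 0.
  have py_polarR : py (polar R) = 0 by rewrite -BR bform_pY.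
  by rewrite /bform py_polarR -/al -/ga /P1 /px /py /pz /=; ring.
have [k k_neq0 eP] := normalize_scale P1_neq0.
exists (normalize P1); split.
- exact: normalized_normalize.
- by rewrite eP conicQZ QP1 mulr0.
- by rewrite eP bformZr BRP1 mulr0.
- rewrite eP; apply: contra_neq alga; rewrite /scalept /P1 /pY /px /py /pz /=.
  move=> -[/eqP + _ /eqP]; rewrite !mulf_eq0 oppr_eq0 (negbTE k_neq0) /=.
  by move=> /eqP -> /eqP ->.
Qed.

Lemma external_polar_pY R : normalized R -> bform pY R = 0 -> R != pY ->
  external a b c d e R.
Proof.
move=> nR BR R_neq_pY.
have polar_pY_neq0 : polar pY != (0, 0, 0).
  exact/polar_neq0/normalized_neq0/normalized_pY.
have [P [nP QP BRP P_neq_pY]] := second_tangency nR BR R_neq_pY.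
apply/andP; split.
  apply/negP => /eqP QR; move/eqP: R_neq_pY; apply.
  exact: conic_polar_eq normalized_pY nR conicQ_pY QR BR.
apply/existsP; exists (normalize (polar pY)); apply/existsP; exists (normalize (polar P)).
have polarP_neq0 := polar_neq0 (normalized_neq0 nP).
rewrite !normalized_normalize // !tangent_line_polar ?normalized_pY ?conicQ_pY //.
rewrite !on_line_normalizel // !on_line_polar BR bformC BRP eqxx !andbT /=.
apply: contra_neq P_neq_pY => eq_tangents.
apply: (conic_polar_eq normalized_pY nP conicQ_pY QP); apply/eqP.
by rewrite -on_line_polar -(on_line_normalizel _ polar_pY_neq0) eq_tangents
  on_line_normalizel // on_line_polar bformvv QP mulr0.
Qed.

End Conic.

Section FqLine.
Variables (K : finFieldType) (q : nat).
Hypotheses (q_odd : odd q) (q_gt1 : (1 < q)%N) (cardK : #|K| = (q ^ 2)%N).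
Variables (b1 d1 : K).
Hypotheses (Fb1 : inFq q b1) (Fd1 : inFq q d1) (b1_neq0 : b1 != 0).

Lemma card_Fq_line_pY :
  #|[set P : pt K | [&& normalized P, ptFq q P, on_line (b1, 0, d1) P & P != pY]]| = q.
Proof.
pose r := d1 / b1.
(* the points of the line other than pY are the (-r : t : 1), t in F_q *)
pose f t : pt K := normalize (- r, t, 1).
have f_neq0 (t : K) : (- r, t, 1) != (0, 0, 0) :> pt K.
  by apply/eqP => -[_ _] /eqP; rewrite oner_eq0.
have f_inj : injective f.
  move=> t1 t2; rewrite /f.
  have [k1 k1_neq0 ->] := normalize_scale (f_neq0 t1).
  have [k2 _ ->] := normalize_scale (f_neq0 t2).
  rewrite /scalept /px /py /pz /= !mulr1 => -[_ + ek]; rewrite ek.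
  by move/mulfI; apply; rewrite -ek.
rewrite -[RHS](card_inFq q_gt1 cardK) -(card_imset _ f_inj).
apply: eq_card => R; rewrite inE; apply/and4P/imsetP.
- case=> nR FR lR R_neq_pY.
  have eRx : px R = - r * pz R.
    apply: (mulfI b1_neq0); move: lR; rewrite /on_line /= mul0r addr0 addr_eq0.
    by move=> /eqP ->; rewrite /r; field.
  have z_neq0 : pz R != 0.
    by apply: contra_neq R_neq_pY => z0; apply: eq_pY; rewrite // eRx z0 mulr0.
  case/and3P: FR => Fx Fy Fz.
  exists (py R / pz R); first by rewrite inE inFqM ?inFqV.
  rewrite /f -[LHS](normalize_id nR).
  rewrite -(normalizeZ (k := (pz R)^-1)) ?invr_eq0 ?normalized_neq0 //.
  by rewrite /scalept eRx mulVf //; congr (normalize (_, _, _)); field.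
- case=> t; rewrite inE => Ft ->; have [k k_neq0 ek] := normalize_scale (f_neq0 t).
  split.
  + exact: normalized_normalize.
  + by apply: ptFq_normalize; rewrite /ptFq /= Ft inFq1 inFqN ?inFqM ?inFqV.
  + by rewrite /f ek on_lineZr // /on_line /px /py /pz /= /r; apply/eqP; field.
  + rewrite /f ek /scalept /pY /pz; apply/eqP => -[] _ _ /eqP.
    by rewrite mulr1 (negbTE k_neq0).
Qed.

End FqLine.

Unset Implicit Arguments.

Theorem mainTheorem11 (K : finFieldType) (q : nat)
  (hq : exists p n : nat, [/\ prime p, (0 < n)%N & q = (p ^ n)%N])
  (hodd : odd q) (hK : #|K| = (q ^ 2)%N)
  (omega eps : K) (homega : inFq q omega)
  (hns : ~ exists y : K, inFq q y /\ y ^+ 2 = omega)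
  (heps : eps ^+ 2 = omega)
  (a b c d e b1 b2 d1 d2 : K)
  (hb1 : inFq q b1) (hb2 : inFq q b2) (hd1 : inFq q d1) (hd2 : inFq q d2)
  (hb : b = b1 + eps * b2) (hd : d = d1 + eps * d2)
  (hC : nonsingular_conic a b c d e)
  (hb0 : b != 0) (hbd : b1 * d2 = b2 * d1)
  (hbd1 : (b1, d1) != (0, 0)) :
  tangent_at a b c d e (b1, 0, d1) (0, 1, 0) /\
  #|[set P : pt K | [&& normalized P, ptFq q P, on_line (b1, 0, d1) P &
                        external a b c d e P]]| = q.
Proof.
have [p [n [p_prime n_gt0 q_eq]]] := hq.
have q_gt1 : (1 < q)%N by rewrite -(ltn_exp2r _ _ (isT : 0 < 2)%N) -hK finNzRing_gt1.
have two_neq0 : 2%:R != 0 :> K.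
  have pK : p \in [pchar K].
    by apply: (card_finPcharP (n := (n * 2)%N)); rewrite // hK q_eq -expnM.
  apply: contraTneq hodd => two0.
  have : (p %| 2)%N by rewrite (dvdn_pcharf pK) two0.
  by rewrite dvdn_prime2 // => /eqP p2; rewrite q_eq p2 oddX orbF -lt0n n_gt0.
have bd : b * d1 = d * b1.
  apply/eqP; rewrite -subr_eq0.
  have -> : b * d1 - d * b1 = eps * (b2 * d1 - b1 * d2) by rewrite hb hd; ring.
  by rewrite hbd subrr mulr0.
have b1_neq0 : b1 != 0.
  apply: contra_neq hbd1 => b10; move/eqP: bd; rewrite b10 mulr0 mulf_eq0 (negbTE hb0) /=.
  by move/eqP ->.
have eline : (b1, 0, d1) = scalept (b1 / b) (polar a b c d e pY).
  rewrite polar_pY /scalept /px /py /pz /=.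
  by congr (_, _, _); [field | ring | apply: (mulfI hb0); rewrite bd; field].
have tangent_pY :=
  tangent_at_polar hC two_neq0 hb0 normalized_pY (conicQ_pY a b c d e).
have b1b_neq0 : b1 / b != 0 by rewrite mulf_neq0 ?invr_eq0.
split; first by rewrite eline; apply: tangent_atZ.
rewrite -[RHS](card_Fq_line_pY hodd q_gt1 hK hb1 hd1 b1_neq0).
apply: eq_card => R; rewrite !inE.
apply/and4P/and4P => -[nR FR lR ext]; split => //.
- by apply: contraTneq ext => ->; rewrite /external /on_conic conicQ_pY eqxx.
- apply: (external_polar_pY hC two_neq0 hb0 nR) => //; apply/eqP.
  by rewrite -on_line_polar -(on_lineZl _ _ b1b_neq0) -eline.
Qed.
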